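(* For every $n \geq 2$, the set $\{Der_n\}$ of deranged linear arrangements of $\{1,\ldots,n\}$ is equidistributed.
   Context: A linear arrangement of $\{1,\ldots,n\}$ is a sequence $a_1\cdots a_n$ in which each of $1,\ldots,n$ appears exactly once; it is deranged if $a_t \neq t$ for all $t$. For a set $X$ of linear arrangements of $\{1,\ldots,n\}$ and $i\in\{1,\ldots,n\}$, the class $X^{(i)}$ is the set of arrangements in $X$ whose first entry is $i$. $X$ is called equidistributed if it is partitioned into its nonempty classes and all nonempty classes $X^{(i)}$ have the same cardinality. *)

From mathcomp Require Import all_boot all_fingroup.
Set Implicit Arguments. Unset Strict Implicit. Unset Printing Implicit Defensive.

(* A linear arrangement a_1 ... a_n of {1,...,n} is encoded (0-indexed) as a
   permutation s : {perm 'I_n}, with a_t = (s (t-1)) + 1.  Thus a_t <> t iff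
   s (t-1) <> t-1, and the first entry a_1 is (s 0) + 1. *)

Definition Der (n : nat) : {set {perm 'I_n}} :=
  [set s : {perm 'I_n} | [forall t : 'I_n, s t != t]].

Definition arr_class (n : nat) (X : {set {perm 'I_n}}) (i : 'I_n)
  : {set {perm 'I_n}} :=
  [set s in X | [exists t : 'I_n, (nat_of_ord t == 0) && (s t == i)]].

Definition equidistributed (n : nat) (X : {set {perm 'I_n}}) : Prop :=
  partition [set arr_class X i | i : 'I_n & arr_class X i != set0] X /\
  (forall i j : 'I_n, arr_class X i != set0 -> arr_class X j != set0 ->
     #|arr_class X i| = #|arr_class X j|).

From mathcomp Require Import all_boot all_fingroup.

(* The classes X^(i) are the fibres of the first-entry map s |-> s 0, so they
   partition X.  Conjugating by the transposition (i j) fixes position 0 when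
   i, j <> 0 and sends s 0 = i to j; as conjugation preserves derangements, it
   maps Der^(i) injectively into Der^(j).  Finally Der^(0) is empty, so every
   nonempty class has i <> 0. *)

Lemma partition_fibres (T I : finType) (D : {set T}) (f : T -> I)
    (F : I -> {set T}) :
  (forall i, F i = [set x in D | f x == i]) ->
  partition [set F i | i : I & F i != set0] D.
Proof.
move=> defF; apply/and3P; split.
- rewrite cover_imset; apply/eqP/setP => x.
  apply/bigcupP/idP => [[i _]|Dx]; first by rewrite defF inE => /andP[].
  have Ffx : x \in F (f x) by rewrite defF inE Dx /=.
  by exists (f x) => //; rewrite inE; apply/set0Pn; exists x.
- apply/trivIsetP => _ _ /imsetP[i _ ->] /imsetP[j _ ->] neqFij.
  have neq_ij : i != j by apply: contraNneq neqFij => ->.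
  apply/pred0P => x; rewrite /= !defF !inE.
  by apply/negP => /andP[/andP[_ /eqP fx_i] /andP[_ /eqP fx_j]];
    rewrite -fx_i fx_j eqxx in neq_ij.
- apply/imsetP => -[i]; rewrite inE => Fi_neq0 Fi_eq0.
  by rewrite -Fi_eq0 eqxx in Fi_neq0.
Qed.

Section ArrangementClasses.

Variable n : nat.
Implicit Types (X : {set {perm 'I_n.+1}}) (i j : 'I_n.+1).

Lemma arr_classE X i : arr_class X i = [set s in X | s ord0 == i].
Proof.
apply/setP => s; rewrite !inE; congr (_ && _).
apply/existsP/idP => [[t /andP[/eqP t0]]|s0]; last by exists ord0.
by have -> : t = ord0 by apply: val_inj.
Qed.

Lemma partition_arr_class X :
  partition [set arr_class X i | i : 'I_n.+1 & arr_class X i != set0] X.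
Proof. exact: partition_fibres (arr_classE X). Qed.

Section ConjugationClosed.

Variable X : {set {perm 'I_n.+1}}.
Hypothesis X_conj : forall s g, s \in X -> (s ^ g)%g \in X.

Lemma card_arr_class_le i j : i != ord0 -> j != ord0 ->
  #|arr_class X i| <= #|arr_class X j|.
Proof.
move=> i0 j0; rewrite -(cardJg _ (tperm i j)); apply/subset_leq_card/subsetP.
move=> _ /imsetP[s cls_s ->]; move: cls_s; rewrite !arr_classE !inE.
move=> /andP[Xs /eqP s0].
have fix0 : tperm i j ord0 = ord0 by apply: tpermD.
by rewrite X_conj //= -{1}fix0 permJ s0 tpermL.
Qed.

Lemma card_arr_class_eq i j : i != ord0 -> j != ord0 ->
  #|arr_class X i| = #|arr_class X j|.
Proof. by move=> i0 j0; apply/eqP; rewrite eqn_leq !card_arr_class_le. Qed.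

End ConjugationClosed.

End ArrangementClasses.

Lemma Der_conj n (s g : {perm 'I_n}) : s \in Der n -> (s ^ g)%g \in Der n.
Proof.
rewrite !inE => /forallP der_s; apply/forallP => t.
by rewrite -[t](permKV g) permJ (inj_eq perm_inj).
Qed.

Lemma arr_class_Der_ord0 n : arr_class (Der n.+1) ord0 = set0.
Proof.
apply/setP => s; rewrite arr_classE !inE.
apply/negP => /andP[/forallP der_s /eqP s0].
by move: (der_s ord0); rewrite s0 eqxx.
Qed.

Theorem proposition4p5 (n : nat) : 2 <= n -> equidistributed (Der n).
Proof.
case: n => [//|n] _; split; first exact: partition_arr_class.
have neq0 i : arr_class (Der n.+1) i != set0 -> i != ord0.
  by apply: contraNneq => ->; rewrite arr_class_Der_ord0.
move=> i j /neq0 i0 /neq0 j0.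
by apply: card_arr_class_eq => //; apply: Der_conj.
Qed.
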